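(* Let $C$ be an $n\times n$ matrix of non-negative integers, and let $m\neq n$. Suppose: - all entries in the first $m$ rows of $C$ are non-zero; - all entries in the last $n-m$ rows of $C$ are zero; - at least one entry of $C$ equals $1$. Then there is an $(n+2)\times(n+2)$ integer matrix $D=(d_{il})$ such that: (i) the last $(n+2)-(m+2)$ rows of $D$ are identically zero; (ii) every entry in the first $m+2$ rows of $D$ is strictly positive; (iii) $d_{i1}=1$ for all $1\le i\le m+2$; (iv) the top-left $(m+2)\times(m+2)$ corner of $D$ has determinant zero; (v) $J_{nm}+C\sim_M J_{(n+2)(m+2)}+D$.
   Context: $J_{nm}$ ($0\le m\le n$) is the $n\times n$ matrix whose $i$-th row, for $i\le m$, has a $1$ in position $i$ and $0$ elsewhere, and whose last $n-m$ rows consist entirely of $\infty$. Arithmetic convention: $\infty+a=\infty$. For an $X\times X$ matrix $A$ with entries in $\{0,1,2,\dots\}\cup\{\infty\}$, $G_A$ is the graph with vertex set $X$ and exactly $A(x,y)$ edges from $x$ to $y$. For matrices, $A\sim_M B$ means $G_A\sim_M G_B$. A graph may have multiple edges and loops. A source receives no edges, a sink emits no edges, and an infinite emitter emits infinitely many edges. A vertex is singular if it is a sink or infinite emitter, and regular otherwise. Move-equivalence $\sim_M$ is the smallest equivalence relation on graphs with finitely many vertices such that $G\sim_M E$ whenever $E$ is isomorphic to a graph obtained from $G$ by one of the following moves. (S) Delete a regular source together with the edges it emits. (R) For a regular vertex $u$ emitting exactly one edge $f$, with $r(f)\neq u$, and all of whose incoming edges have the same source $v$: delete $u$, $f$ and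 the edges into $u$, and add for each $e\in r^{-1}(u)$ an edge $[ef]$ from $v$ to $r(f)$. (O) Out-splitting at a non-sink $v$ along a partition $\mathcal E_1,\dots,\mathcal E_n$ of $s^{-1}(v)$ with at most one infinite part. Replace $v$ by $v^1,\dots,v^n$. Each edge $e$ into $v$ becomes copies $e^1,\dots,e^n$ with $r(e^i)=v^i$ and source $s(e)$, or source $v^j$ if $s(e)=v$ and $e\in\mathcal E_j$. An edge from $v$ to $w\neq v$ lying in $\mathcal E_i$ gets source $v^i$. (I) In-splitting at a regular non-source $v$ along a partition $\mathcal E_1,\dots,\mathcal E_n$ of $r^{-1}(v)$. Replace $v$ by $v^1,\dots,v^n$. Each edge $e$ out of $v$ becomes copies $e^1,\dots,e^n$ with $s(e^i)=v^i$ and range $r(e)$, or range $v^j$ if $r(e)=v$ and $e\in\mathcal E_j$. An edge into $v$ from $w\neq v$ lying in $\mathcal E_i$ gets range $v^i$. *)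

From HB Require Import structures.
From Stdlib Require List.
From mathcomp Require Import all_boot all_algebra.


Unset Printing Implicit Defensive.

Record graph := Graph { gV : finType; gE : Type; gs : gE -> gV; gr : gE -> gV }.
Arguments gs {g} _.
Arguments gr {g} _.

Definition is_source (G : graph) (v : gV G) := forall e : gE G, gr e <> v.
Definition is_sink (G : graph) (v : gV G) := forall e : gE G, gs e <> v.
Definition finite_edges (G : graph) (P : gE G -> Prop) :=
  exists l : seq (gE G), forall e, P e -> List.In e l.
Definition inf_emitter (G : graph) (v : gV G) := ~ finite_edges G (fun e : gE G => gs e = v).
Definition singular (G : graph) (v : gV G) := is_sink G v \/ inf_emitter G v.
Definition regular (G : graph) (v : gV G) := ~ singular G v.

Definition graph_iso (G H : graph) :=
  exists (fV : gV G -> gV H) (hV : gV H -> gV G) (fE : gE G -> gE H) (hE : gE H -> gE G),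
    cancel fV hV /\ cancel hV fV /\ cancel fE hE /\ cancel hE fE /\
    (forall e, gs (fE e) = fV (gs e)) /\ (forall e, gr (fE e) = fV (gr e)).

Section Del.
Variables (G : graph) (u : gV G).
Definition del_E := {e : gE G | (gs e != u) && (gr e != u)}.
Lemma del_s (e : del_E) : gs (proj1_sig e) != u.
Proof. by case: e => e /= /andP []. Qed.
Lemma del_r (e : del_E) : gr (proj1_sig e) != u.
Proof. by case: e => e /= /andP []. Qed.
Definition del_graph : graph :=
  @Graph {x : gV G | x != u} del_E
    (fun e => exist _ (gs (proj1_sig e)) (del_s e))
    (fun e => exist _ (gr (proj1_sig e)) (del_r e)).
End Del.

(* ---------- (R): reduction at u, with unique out-edge f, incoming edges
   all from v; edges e into u are replaced by [ef] from v to r(f). ---------- *)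
Section Red.
Variables (G : graph) (u v : gV G) (f : gE G) (hv : v != u) (hf : gr f != u).
Definition red_E := (del_E G u + {e : gE G | gr e == u})%type.
Definition red_graph : graph :=
  @Graph {x : gV G | x != u} red_E
    (fun e => match e with
              | inl e => exist _ (gs (proj1_sig e)) (del_s G u e)
              | inr _ => exist _ v hv end)
    (fun e => match e with
              | inl e => exist _ (gr (proj1_sig e)) (del_r G u e)
              | inr _ => exist _ (gr f) hf end).
End Red.

Section Split.
Variables (G : graph) (v : gV G) (k : nat) (p : gE G -> 'I_k).
Definition split_V := ({x : gV G | x != v} + 'I_k)%type.
Definition sproj (x : gV G) (d : 'I_k) : split_V :=
  match @insub _ (fun y => y != v) {y : gV G | y != v} x with
  | Some y => inl y
  | None => inr d end.

Definition osplit_E := ({e : gE G | gr e != v} + ({e : gE G | gr e == v} * 'I_k))%type.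
Definition osplit_graph : graph :=
  @Graph split_V osplit_E
    (fun e => match e with
              | inl e => sproj (gs (proj1_sig e)) (p (proj1_sig e))
              | inr (e, _) => sproj (gs (proj1_sig e)) (p (proj1_sig e)) end)
    (fun e => match e with
              | inl e => sproj (gr (proj1_sig e)) (p (proj1_sig e))
              | inr (_, i) => inr i end).

Definition isplit_E := ({e : gE G | gs e != v} + ({e : gE G | gs e == v} * 'I_k))%type.
Definition isplit_graph : graph :=
  @Graph split_V isplit_E
    (fun e => match e with
              | inl e => sproj (gs (proj1_sig e)) (p (proj1_sig e))
              | inr (_, i) => inr i end)
    (fun e => match e with
              | inl e => sproj (gr (proj1_sig e)) (p (proj1_sig e))
              | inr (e, _) => sproj (gr (proj1_sig e)) (p (proj1_sig e)) end).
End Split.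

Inductive move_step : graph -> graph -> Prop :=
| MoveS (G H : graph) (v : gV G) :
    regular G v -> is_source G v -> graph_iso (del_graph G v) H -> move_step G H
| MoveR (G H : graph) (u v : gV G) (f : gE G) (hv : v != u) (hf : gr f != u) :
    regular G u -> gs f = u -> (forall e, gs e = u -> e = f) ->
    (forall e, gr e = u -> gs e = v) ->
    graph_iso (red_graph G u v f hv hf) H -> move_step G H
| MoveO (G H : graph) (v : gV G) (k : nat) (p : gE G -> 'I_k) :
    ~ is_sink G v ->
    (forall i, exists e, gs e = v /\ p e = i) ->
    (* at most one infinite part *)
    (forall i j, i != j -> finite_edges G (fun e => gs e = v /\ p e = i)
                        \/ finite_edges G (fun e => gs e = v /\ p e = j)) ->
    graph_iso (osplit_graph G v k p) H -> move_step G H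
| MoveI (G H : graph) (v : gV G) (k : nat) (p : gE G -> 'I_k) :
    regular G v -> ~ is_source G v ->
    (forall i, exists e, gr e = v /\ p e = i) ->
    graph_iso (isplit_graph G v k p) H -> move_step G H.

Inductive move_eq : graph -> graph -> Prop :=
| me_step G H : move_step G H -> move_eq G H
| me_refl G : move_eq G G
| me_sym G H : move_eq G H -> move_eq H G
| me_trans G H K : move_eq G H -> move_eq H K -> move_eq G K.

Inductive xnat := XFin of nat | XInf.
Definition xadd (a b : xnat) : xnat :=
  match a, b with XFin x, XFin y => XFin (x + y) | _, _ => XInf end.
Definition xlt (k : nat) (a : xnat) : bool :=
  match a with XFin x => k < x | XInf => true end.

(* G_A: vertex set 'I_n, exactly A x y edges from x to y
   (edges from x to y are the (x,y,k) with k < A x y) *)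
Definition mgraph (n : nat) (A : 'I_n -> 'I_n -> xnat) : graph :=
  @Graph 'I_n {t : 'I_n * 'I_n * nat | xlt t.2 (A t.1.1 t.1.2)}
    (fun t => (proj1_sig t).1.1) (fun t => (proj1_sig t).1.2).

Definition move_eq_mx (n n' : nat) (A : 'I_n -> 'I_n -> xnat) (B : 'I_n' -> 'I_n' -> xnat) :=
  move_eq (mgraph n A) (mgraph n' B).

Definition Jmx (n m : nat) : 'I_n -> 'I_n -> xnat :=
  fun i j => if (i < m)%N then XFin (i == j) else XInf.

Definition Jplus (n m : nat) (C : 'I_n -> 'I_n -> nat) : 'I_n -> 'I_n -> xnat :=
  fun i j => xadd (Jmx n m i j) (XFin (C i j)).

From HB Require Import structures.
From mathcomp Require Import all_boot all_algebra zify.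
From Stdlib Require Import ClassicalEpsilon FunctionalExtensionality.

(* Let w = 0 be a regular vertex and v = m the first singular one (m > 0
   because some entry of C is 1).  Adding column v to column w twice (an
   out-splitting at v undone by an in-splitting at w) makes the column of w
   large enough that two in-splittings at w can detach two copies of w, each
   receiving exactly one edge from every regular vertex.  The copies have
   equal rows and columns, so they merge (an inverse out-splitting) into one
   vertex whose column in J + D is 1 on every regular row.  Finally an
   out-splitting of v detaches a regular vertex whose row, minus the identity,
   is the row of w, so the regular corner of D has two equal rows. *)

(* A bundle of [T] parallel edges, numbered [j] with [xlt j T], is cut into a
   first part of size [a] and the rest [xsub T a]; [part_index a j] renumbers
   edge [j] inside its part.  An infinite first part takes the even-numbered
   edges, so that an infinite bundle can be cut into two infinite ones. *)
Definition xle (a T : xnat) : bool :=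
  match a, T with XFin k, XFin t => k <= t | XInf, XFin _ => false | _, XInf => true end.
Definition xsub (T a : xnat) : xnat :=
  match T, a with XFin t, XFin k => XFin (t - k) | XFin _, XInf => XFin 0 | XInf, _ => XInf end.
Definition first_part (a : xnat) (j : nat) : bool := if a is XFin k then j < k else ~~ odd j.
Definition part_index (a : xnat) (j : nat) : nat :=
  if a is XFin k then (if j < k then j else j - k) else j./2.

Lemma part_index_first_lt a j : first_part a j -> xlt (part_index a j) a.
Proof. by case: a => [k|] //= j_first; rewrite j_first. Qed.

Lemma part_index_rest_lt {a T j} :
  xle a T -> xlt j T -> ~~ first_part a j -> xlt (part_index a j) (xsub T a).
Proof.
by case: a => [k|]; case: T => [t|] //= ? ? j_rest; rewrite (negbTE j_rest) //=; lia.
Qed.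

Lemma part_index_inj {a j j'} :
  first_part a j = first_part a j' -> part_index a j = part_index a j' -> j = j'.
Proof.
case: a => [k|] /=; first by case: ltnP => ?; case: ltnP => ? //= _; lia.
move=> /negb_inj odd_eq half_eq.
by rewrite -(odd_double_half j) -(odd_double_half j') odd_eq half_eq.
Qed.

Lemma part_index_first_onto {a T i} : xle a T -> xlt i a ->
  exists j, [/\ xlt j T, first_part a j & part_index a j = i].
Proof.
case: a => [k|]; case: T => [t|] //= a_le i_lt.
- by exists i; rewrite /= i_lt; split => //; lia.
- by exists i; rewrite i_lt.
- exists i.*2; rewrite odd_double; split => //.
  by rewrite -[i.*2]/(false + i.*2) half_bit_double.
Qed.

Lemma part_index_rest_onto {a T i} : xle a T -> xlt i (xsub T a) ->
  exists j, [/\ xlt j T, ~~ first_part a j & part_index a j = i].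
Proof.
case: a => [k|]; case: T => [t|] //= a_le i_lt.
- by exists (i + k); rewrite ifN; [split => //; lia | lia].
- by exists (i + k); rewrite ifN; [split => //; lia | lia].
- by exists i.*2.+1; rewrite /= odd_double uphalf_double.
Qed.

Definition mxgraph (V : finType) (A : V -> V -> xnat) : graph :=
  @Graph V {t : V * V * nat | xlt t.2 (A t.1.1 t.1.2)}
    (fun t => (proj1_sig t).1.1) (fun t => (proj1_sig t).1.2).

(* Through [c], [G] is a copy of [mxgraph A]. *)
Record numbering (G : graph) (A : gV G -> gV G -> xnat) (c : gE G -> nat) : Prop := {
  numbering_lt : forall e, xlt (c e) (A (gs e) (gr e));
  numbering_inj : forall e e', gs e = gs e' -> gr e = gr e' -> c e = c e' -> e = e';
  numbering_onto : forall x y j, xlt j (A x y) ->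
    exists e, [/\ gs e = x, gr e = y & c e = j] }.
Arguments numbering_lt {G A c}.
Arguments numbering_inj {G A c}.
Arguments numbering_onto {G A c}.

Definition mxgraph_label {V : finType} {A : V -> V -> xnat} (e : gE (mxgraph V A)) : nat :=
  (proj1_sig e).2.

Lemma numbering_mxgraph V A : numbering (mxgraph V A) A mxgraph_label.
Proof.
rewrite /mxgraph_label; split.
- by case=> [[[x y] j] ?].
- by case=> [[[x y] j] ?] [[[x' y'] j'] ?] /= ex ey ej; subst; apply: val_inj.
- by move=> x y j j_lt; exists (exist _ (x, y, j) j_lt).
Qed.

Definition rev_graph (G : graph) : graph := @Graph (gV G) (gE G) (@gr G) (@gs G).

Lemma numbering_rev {G A c} : numbering G A c -> numbering (rev_graph G) (fun x y => A y x) c.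
Proof.
case=> c_lt c_inj c_onto; split => //= [e e' ? ?|x y j /c_onto [e [? ? ?]]].
- exact: c_inj.
- by exists e.
Qed.

Lemma numbering_iso {G H : graph} {A B c d} (f : gV G -> gV H) (g : gV H -> gV G) :
  numbering G A c -> numbering H B d -> cancel f g -> cancel g f ->
  (forall x y, B (f x) (f y) = A x y) -> graph_iso G H.
Proof.
move=> cG dH fK gK Bf.
have fE_ex (e : gE G) : exists e', [/\ gs e' = f (gs e), gr e' = f (gr e) & d e' = c e].
  by apply: (numbering_onto dH); rewrite Bf; exact: numbering_lt cG e.
have gE_ex (e : gE H) : exists e', [/\ gs e' = g (gs e), gr e' = g (gr e) & c e' = d e].
  by apply: (numbering_onto cG); rewrite -Bf !gK; exact: numbering_lt dH e.
pose fE e := proj1_sig (constructive_indefinite_description _ (fE_ex e)).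
pose gE e := proj1_sig (constructive_indefinite_description _ (gE_ex e)).
have fEP e : [/\ gs (fE e) = f (gs e), gr (fE e) = f (gr e) & d (fE e) = c e].
  exact: proj2_sig (constructive_indefinite_description _ (fE_ex e)).
have gEP e : [/\ gs (gE e) = g (gs e), gr (gE e) = g (gr e) & c (gE e) = d e].
  exact: proj2_sig (constructive_indefinite_description _ (gE_ex e)).
exists f, g, fE, gE; do !split => //.
- move=> e; have [? ? ?] := gEP (fE e); have [? ? ?] := fEP e.
  by apply: (numbering_inj cG) => //; congruence.
- move=> e; have [? ? ?] := fEP (gE e); have [? ? ?] := gEP e.
  by apply: (numbering_inj dH) => //; congruence.
- by move=> e; have [] := fEP e.
- by move=> e; have [] := fEP e.
Qed.

Lemma In_of_mem (T : eqType) (x : T) (s : seq T) : x \in s -> List.In x s.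
Proof. by elim: s => //= y s IH; rewrite in_cons => /predU1P [->|/IH]; [left|right]. Qed.

Lemma finite_edges_mxgraph (V : finType) A (x : V) (bound : V -> nat) (P : gE (mxgraph V A) -> Prop) :
  (forall e, P e -> gs e = x /\ mxgraph_label e < bound (gr e)) -> finite_edges (mxgraph V A) P.
Proof.
move=> P_bounded.
exists (pmap insub [seq (x, y, j) | y <- enum V, j <- iota 0 (bound y)]).
move=> e /P_bounded [e_src e_lt]; apply: In_of_mem; rewrite mem_pmap_sub.
move: e_src e_lt; rewrite /mxgraph_label; case: e => [[[x' y] j] ?] /= -> j_lt.
by apply/allpairsPdep; exists y, j; rewrite mem_enum mem_iota.
Qed.

(* The matrix of the out-splitting at [v] that detaches the part [a] of the
   row of [v]: the new vertex [None] emits [a], [Some v] keeps [A v - a], and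
   column [None] repeats column [v]. *)
Definition osplit_mx (V : finType) (A : V -> V -> xnat) (v : V) (a : V -> xnat)
    (s t : option V) : xnat :=
  let y := odflt v t in
  match s with None => a y | Some x => if x == v then xsub (A v y) (a y) else A x y end.
Arguments osplit_mx {V}.

Lemma ord2_cases (i : 'I_2) : i = ord0 \/ i = ord_max.
Proof. by case: i => [[|[|k]] ?] //; [left|right]; apply: val_inj. Qed.

Section OutSplitting.
Variables (G : graph) (A : gV G -> gV G -> xnat) (c : gE G -> nat).
Variables (v : gV G) (a : gV G -> xnat).

Definition split_part (e : gE G) : 'I_2 :=
  if first_part (a (gr e)) (c e) then ord0 else ord_max.
Definition split_label (e : gE G) : nat :=
  if gs e == v then part_index (a (gr e)) (c e) else c e.
Definition osplit_label (e : gE (osplit_graph G v 2 split_part)) : nat :=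
  match e with inl e | inr (e, _) => split_label (proj1_sig e) end.

Definition split_vertex (s : split_V G v 2) : option (gV G) :=
  match s with inl x => Some (proj1_sig x) | inr i => if i == ord0 then None else Some v end.
Definition unsplit_vertex (o : option (gV G)) : split_V G v 2 :=
  if o is Some x then sproj G v 2 x ord_max else inr ord0.
Definition split_source (e : gE G) : option (gV G) :=
  if gs e == v then (if split_part e == ord0 then None else Some v) else Some (gs e).

Lemma split_vertex_sproj x d : split_vertex (sproj G v 2 x d) =
  if x == v then (if d == ord0 then None else Some v) else Some x.
Proof.
rewrite /sproj; case: insubP => [y y_v x_eq|] /=; first by rewrite (negbTE y_v) -x_eq.
by rewrite negbK => ->.
Qed.

Lemma split_vertexK : cancel split_vertex unsplit_vertex.
Proof.
case=> [[x x_v]|i] /=; first by rewrite /sproj insubT.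
by case: (ord2_cases i) => -> //=; rewrite /sproj insubF ?eqxx.
Qed.

Lemma unsplit_vertexK : cancel unsplit_vertex split_vertex.
Proof. by case=> [x|] //=; rewrite split_vertex_sproj; case: eqP => // ->. Qed.

Lemma split_part_eq0 e : (split_part e == ord0) = first_part (a (gr e)) (c e).
Proof. by rewrite /split_part; case: ifP. Qed.

Hypotheses (c_num : numbering G A c) (a_le : forall y, xle (a y) (A v y)).

Lemma split_label_lt e :
  xlt (split_label e) (osplit_mx A v a (split_source e) (Some (gr e))).
Proof.
have := numbering_lt c_num e; rewrite /split_label /split_source /osplit_mx /=.
case: eqP => [e_v|]; last by case: eqP.
rewrite split_part_eq0 e_v; case: ifP => e_first /= e_lt; first exact: part_index_first_lt.
by rewrite eqxx; apply: part_index_rest_lt (a_le _) e_lt _; rewrite e_first.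
Qed.

Lemma split_label_inj e e' : split_source e = split_source e' -> gr e = gr e' ->
  split_label e = split_label e' -> e = e'.
Proof.
rewrite /split_source /split_label.
case: (eqVneq (gs e) v) => e_v; case: (eqVneq (gs e') v) => e'_v //=.
- rewrite !split_part_eq0 => src_eq r_eq; rewrite r_eq => c_eq.
  apply: (numbering_inj c_num) => //; first by rewrite e_v e'_v.
  by apply: part_index_inj c_eq; move: src_eq; rewrite r_eq; do 2 case: ifP.
- by case: ifP => _ // -[e_src]; rewrite -e_src eqxx in e'_v.
- by case: ifP => _ // -[e_src]; rewrite e_src eqxx in e_v.
- by move=> [] *; apply: (numbering_inj c_num).
Qed.

Lemma split_label_onto s y j : xlt j (osplit_mx A v a (split_vertex s) (Some y)) ->
  exists e, [/\ gr e = y, split_label e = j & split_source e = split_vertex s].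
Proof.
rewrite /split_source /split_label; case: s => [[x x_v]|i] /=.
  rewrite (negbTE x_v) => /(numbering_onto c_num) [e [e_src e_r e_c]].
  by exists e; rewrite e_src (negbTE x_v).
case: ifP => _.
  case/(part_index_first_onto (a_le y)) => k [k_lt k_first <-].
  case/(numbering_onto c_num): k_lt => e [e_src e_r e_c]; exists e.
  by rewrite e_src eqxx split_part_eq0 e_r e_c k_first.
rewrite /osplit_mx /= eqxx; case/(part_index_rest_onto (a_le y)) => k [k_lt k_rest <-].
case/(numbering_onto c_num): k_lt => e [e_src e_r e_c]; exists e.
by rewrite e_src eqxx split_part_eq0 e_r e_c (negbTE k_rest).
Qed.

Lemma numbering_osplit : numbering (osplit_graph G v 2 split_part)
  (fun s t => osplit_mx A v a (split_vertex s) (split_vertex t)) osplit_label.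
Proof.
have src_eq e : split_vertex (sproj G v 2 (gs e) (split_part e)) = split_source e.
  by rewrite split_vertex_sproj.
split.
- case=> [[e e_v]|[[e /eqP e_v] i]] /=; rewrite src_eq ?split_vertex_sproj.
    by rewrite (negbTE e_v); apply: split_label_lt.
  by have := split_label_lt e; rewrite e_v; case: (i == ord0).
- case=> [[e e_v]|[[e e_v] i]] [[e' e'_v]|[[e' e'_v] i']] /=;
    move=> /(congr1 split_vertex); rewrite !src_eq => s_eq r_eq c_eq.
  + have e_eq : e = e'.
      apply: split_label_inj => //; move/(congr1 split_vertex): r_eq.
      by rewrite !split_vertex_sproj (negbTE e_v) (negbTE e'_v) => -[].
    by subst e'; congr inl; apply: val_inj.
  + move/(congr1 split_vertex): r_eq; rewrite split_vertex_sproj (negbTE e_v) /=.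
    by case: (i' == ord0) => // -[r_e]; have := e_v; rewrite r_e eqxx.
  + move/(congr1 split_vertex): r_eq; rewrite split_vertex_sproj (negbTE e'_v) /=.
    by case: (i == ord0) => // -[r_e]; have := e'_v; rewrite -r_e eqxx.
  + case: r_eq => i_eq; subst i'.
    have e_eq : e = e' by apply: split_label_inj => //; rewrite (eqP e_v) (eqP e'_v).
    by subst e'; congr (inr (_, _)); apply: val_inj.
- move=> s [y|i] j j_lt.
    have [e [e_r e_c e_src]] := split_label_onto s (proj1_sig y) j j_lt.
    have e_v : gr e != v by rewrite e_r (proj2_sig y).
    exists (inl (exist _ e e_v)); split => //=; apply: (can_inj split_vertexK).
    + by rewrite src_eq.
    + by rewrite split_vertex_sproj (negbTE e_v) e_r.
  have {}j_lt : xlt j (osplit_mx A v a (split_vertex s) (Some v)).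
    by move: j_lt; rewrite /=; case: (i == ord0).
  have [e [e_r e_c e_src]] := split_label_onto s v j j_lt.
  have e_v : gr e == v by rewrite e_r.
  exists (inr (exist _ e e_v, i)); split => //=.
  by apply: (can_inj split_vertexK); rewrite src_eq.
Qed.

End OutSplitting.
Arguments split_part {G} c a e.
Arguments split_vertex {G} v s.
Arguments unsplit_vertex {G} v o.
Arguments split_vertexK {G v}.
Arguments unsplit_vertexK {G v}.
Arguments numbering_osplit {G A c v a}.

Definition xval (a : xnat) : nat := if a is XFin k then k else 0.

Lemma xlt_xle {j a T} : xlt j a -> xle a T -> xlt j T.
Proof. by case: a => [k|]; case: T => [t|] //=; lia. Qed.

Lemma move_step_osplit (V W : finType) (A : V -> V -> xnat) (v : V) (a : V -> xnat)
    (B : W -> W -> xnat) (f : option V -> W) (g : W -> option V) :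
  (forall y, xle (a y) (A v y)) -> (forall y, a y <> XInf) ->
  (exists y, xlt 0 (a y)) -> (exists y, xlt 0 (xsub (A v y) (a y))) ->
  cancel f g -> cancel g f -> (forall s t, B (f s) (f t) = osplit_mx A v a s t) ->
  move_step (mxgraph V A) (mxgraph W B).
Proof.
move=> a_le a_fin [y0 a_pos] [y1 rest_pos] fK gK Bf.
have A_pos : xlt 0 (A v y0) := xlt_xle a_pos (a_le y0).
pose p := split_part (G := mxgraph V A) mxgraph_label a.
apply: (@MoveO (mxgraph V A) (mxgraph W B) v 2 p).
- by move=> v_sink; apply: (v_sink (exist _ (v, y0, 0) A_pos)).
- move=> i; case: (ord2_cases i) => ->.
    exists (exist _ (v, y0, 0) A_pos); split => //.
    rewrite /p /split_part /mxgraph_label /=; move: (a_fin y0) a_pos.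
    by case: (a y0) => //= k _ ->.
  have [j [j_lt j_rest _]] := part_index_rest_onto (a_le y1) rest_pos.
  exists (exist _ (v, y1, j) j_lt); split => //.
  by rewrite /p /split_part /mxgraph_label /= (negbTE j_rest).
- have first_fin : finite_edges (mxgraph V A) (fun e => gs e = v /\ p e = ord0).
    apply: (@finite_edges_mxgraph V A v (fun y => xval (a y))) => e [e_src].
    rewrite /p /split_part; move: (a_fin (gr e)).
    by case: (a (gr e)) => //= k _; case: ifP.
  move=> i j; case: (ord2_cases i) => ->; first by left.
  by case: (ord2_cases j) => -> //; right.
- apply: (numbering_iso (G := osplit_graph (mxgraph V A) v 2 p) (H := mxgraph W B)
    (f \o split_vertex (G := mxgraph V A) v)
    (unsplit_vertex (G := mxgraph V A) v \o g) (numbering_osplit (numbering_mxgraph V A) a_le)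
    (numbering_mxgraph W B)).
  + by move=> s /=; rewrite fK split_vertexK.
  + by move=> w /=; rewrite unsplit_vertexK gK.
  + by move=> s t /=; rewrite Bf.
Qed.

(* In-splitting is out-splitting in the reversed graph. *)
Lemma move_step_isplit (V W : finType) (A : V -> V -> xnat) (w : V) (b : V -> xnat)
    (B : W -> W -> xnat) (f : option V -> W) (g : W -> option V) :
  (forall x, xle (b x) (A x w)) -> (forall y, A w y <> XInf) -> (exists y, xlt 0 (A w y)) ->
  (exists x, xlt 0 (b x)) -> (exists x, xlt 0 (xsub (A x w) (b x))) ->
  cancel f g -> cancel g f ->
  (forall s t, B (f s) (f t) = osplit_mx (fun x y => A y x) w b t s) ->
  move_step (mxgraph V A) (mxgraph W B).
Proof.
move=> b_le A_fin [y A_pos] [x0 b_pos] [x1 rest_pos] fK gK Bf.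
pose G := mxgraph V A.
have c_num := numbering_rev (numbering_mxgraph V A).
pose p := split_part (G := rev_graph G) mxgraph_label b.
apply: (@MoveI G (mxgraph W B) w 2 p).
- case=> [w_sink|w_inf]; first exact: (w_sink (exist _ (w, y, 0) A_pos)).
  apply: w_inf; apply: (@finite_edges_mxgraph V A w (fun y => xval (A w y))).
  move=> [[[x' y'] j] j_lt] /= x_w; subst x'; split => //.
  by move: j_lt (A_fin y'); rewrite /mxgraph_label /=; case: (A w y').
- have A_pos' : xlt 0 (A x0 w) := xlt_xle b_pos (b_le x0).
  by move=> w_source; apply: (w_source (exist _ (x0, w, 0) A_pos')).
- move=> i; case: (ord2_cases i) => ->.
    have [j [j_lt j_first _]] := part_index_first_onto (b_le x0) b_pos.
    exists (exist _ (x0, w, j) j_lt); split => //.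
    by rewrite /p /split_part /mxgraph_label /= j_first.
  have [j [j_lt j_rest _]] := part_index_rest_onto (b_le x1) rest_pos.
  exists (exist _ (x1, w, j) j_lt); split => //.
  by rewrite /p /split_part /mxgraph_label /= (negbTE j_rest).
- apply: (numbering_iso (G := rev_graph (osplit_graph (rev_graph G) w 2 p)) (H := mxgraph W B)
    (f \o split_vertex (G := rev_graph G) w)
    (unsplit_vertex (G := rev_graph G) w \o g) (numbering_rev (numbering_osplit c_num b_le))
    (numbering_mxgraph W B)).
  + by move=> s /=; rewrite fK split_vertexK.
  + by move=> x /=; rewrite unsplit_vertexK gK.
  + by move=> s t /=; rewrite Bf.
Qed.

Definition fin_rows_mx (V : finType) (r : pred V) (N : V -> V -> nat) (x y : V) : xnat :=
  if r x then XFin (N x y) else XInf.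
Arguments fin_rows_mx {V}.

Definition add_col (V : finType) (N : V -> V -> nat) (w v : V) (x y : V) : nat :=
  N x y + (y == w) * N x v.
Arguments add_col {V}.

(* Out-splitting the singular vertex [v] along the row of [w], and
   in-splitting [w] along column [v] after the column addition, give the same
   graph. *)
Lemma move_eq_add_col (V : finType) (r : pred V) (N : V -> V -> nat) (w v : V) :
  r w -> ~~ r v -> 0 < N w w ->
  move_eq (mxgraph V (fin_rows_mx r N)) (mxgraph V (fin_rows_mx r (add_col N w v))).
Proof.
move=> rw rv Nww.
pose A := fin_rows_mx r N.
apply: (@me_trans _ (mxgraph (option V) (osplit_mx A v (A w)))).
  apply: me_step; apply: (@move_step_osplit _ _ A v (A w) _ id id) => //.
  - by move=> y; rewrite /A /fin_rows_mx (negbTE rv); case: ifP.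
  - by move=> y; rewrite /A /fin_rows_mx rw.
  - by exists w; rewrite /A /fin_rows_mx rw.
  - by exists w; rewrite /A /fin_rows_mx (negbTE rv).
apply: me_sym; apply: me_step.
apply: (@move_step_isplit _ _ _ w (fun x => A x v) _ id id) => //.
- by move=> x; rewrite /A /fin_rows_mx /add_col eqxx mul1n; case: (r x) => //=; lia.
- by move=> y; rewrite /fin_rows_mx rw.
- by exists w; rewrite /fin_rows_mx /add_col rw eqxx /=; lia.
- by exists v; rewrite /A /fin_rows_mx (negbTE rv).
- by exists v; rewrite /A /fin_rows_mx (negbTE rv).
- move=> [x|] [z|]; rewrite /osplit_mx /A /fin_rows_mx /add_col /=.
  + case: (eqVneq x v) => [->|_]; first by rewrite (negbTE rv); case: eqP.
    by case: (eqVneq z w) => [->|_]; case: (r x) => //=; rewrite ?eqxx ?mul1n ?mul0n ?addnK ?addn0.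
  + by case: (eqVneq x v) => [->|_]; rewrite ?(negbTE rv).
  + by case: (eqVneq z w) => [->|_]; rewrite /= rw ?eqxx /= ?mul1n ?mul0n ?addnK ?addn0.
  + by rewrite rw.
Qed.

Section Construction.
Variables (n m : nat) (C : 'M[nat]_n).
Hypotheses (m_gt0 : 0 < m) (m_lt_n : m < n) (C_pos : forall i j : 'I_n, i < m -> 0 < C i j).

Let w : 'I_n := Ordinal (ltn_trans m_gt0 m_lt_n).
Let v : 'I_n := Ordinal m_lt_n.
Let reg : pred 'I_n := fun x => x < m.

Lemma reg_w : reg w. Proof. by []. Qed.
Lemma sing_v : ~~ reg v. Proof. by rewrite /reg /= ltnn. Qed.
Lemma w_neq_v : w != v. Proof. by apply/eqP => /(congr1 val) /= m0; move: m_gt0; rewrite -m0. Qed.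

Definition J_fin (x y : 'I_n) : nat := (x == y) + C x y.
Definition N_col : 'I_n -> 'I_n -> nat := add_col (add_col J_fin w v) w v.

Lemma N_colE x y : reg x -> N_col x y = (x == y) + C x y + (y == w) * (C x v + C x v).
Proof.
move=> reg_x; have x_v : (x == v) = false by apply: contraNF sing_v => /eqP <-.
have v_w : (v == w) = false by rewrite eq_sym (negbTE w_neq_v).
by rewrite /N_col /add_col /J_fin x_v v_w; case: (y == w) => /=; lia.
Qed.

(* Two in-splittings at [w] detach two copies of [w] that receive one edge
   from each regular vertex; [None] and [Some None] are the new copies. *)
Definition one_from_reg (x : 'I_n) : xnat := if reg x then XFin 1 else XInf.
Definition A_in1 (s t : option 'I_n) : xnat :=
  osplit_mx (fun x y => fin_rows_mx reg N_col y x) w one_from_reg t s.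
Definition A_in2 (s t : option (option 'I_n)) : xnat :=
  osplit_mx (fun x y => A_in1 y x) (Some w) (fun x => one_from_reg (odflt w x)) t s.

(* The two copies, having equal rows and columns, are merged into [None]. *)
Definition merged_row (t : option 'I_n) : xnat := A_in2 None (Some t).
Definition A_merged (s t : option 'I_n) : xnat :=
  if s is Some x then A_in2 (Some (Some x)) (Some t) else xadd (merged_row t) (merged_row t).
Definition merged_entry (x : 'I_n) (t : option 'I_n) : nat :=
  if t is Some z then (if z == w then N_col x w - 2 else N_col x z) else 1.

Lemma A_mergedE x t : A_merged (Some x) t = if reg x then XFin (merged_entry x t) else XInf.
Proof.
rewrite /A_merged /A_in2 /A_in1 /osplit_mx /one_from_reg /fin_rows_mx /merged_entry /=.
case: t => [z|] //=; case: (eqVneq z w) => [->|z_w] /=; rewrite ?eqxx //=.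
  by case: (reg x) => //=; rewrite -subnDA.
by rewrite (inj_eq Some_inj) (negbTE z_w).
Qed.

Lemma merged_rowE t : merged_row t = XFin (merged_entry w t).
Proof. by rewrite -[merged_row t]/(A_merged (Some w) t) A_mergedE reg_w. Qed.

Lemma move_eq_col : move_eq (mxgraph 'I_n (Jplus n m (fun i j => C i j)))
  (mxgraph 'I_n (fin_rows_mx reg N_col)).
Proof.
have -> : Jplus n m (fun i j => C i j) = fin_rows_mx reg J_fin.
  by do 2 apply: functional_extensionality => ?; rewrite /Jplus /Jmx /fin_rows_mx /reg; case: ifP.
apply: (me_trans _ _ _ (@move_eq_add_col _ reg J_fin w v reg_w sing_v _)
                       (@move_eq_add_col _ reg (add_col J_fin w v) w v reg_w sing_v _)).
  by rewrite /J_fin eqxx.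
by rewrite /add_col /J_fin eqxx.
Qed.

Lemma move_step_in1 : move_step (mxgraph 'I_n (fin_rows_mx reg N_col)) (mxgraph _ A_in1).
Proof.
apply: (@move_step_isplit _ _ _ w one_from_reg _ id id) => //.
- move=> x; rewrite /one_from_reg /fin_rows_mx; case: ifP => reg_x //=.
  by rewrite N_colE //; have := C_pos x w reg_x; lia.
- by move=> y; rewrite /fin_rows_mx reg_w.
- by exists w; rewrite /fin_rows_mx reg_w /= N_colE // eqxx; lia.
- by exists w; rewrite /one_from_reg reg_w.
- by exists v; rewrite /fin_rows_mx (negbTE sing_v).
Qed.

Lemma move_step_in2 : move_step (mxgraph _ A_in1) (mxgraph _ A_in2).
Proof.
apply: (@move_step_isplit _ _ _ (Some w) (fun x => one_from_reg (odflt w x)) _ id id) => //.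
- move=> x; rewrite /A_in1 /osplit_mx /= /fin_rows_mx /one_from_reg.
  case: ifP => reg_x //=; rewrite N_colE // eqxx mul1n.
  by have := C_pos (odflt w x) w reg_x; have := C_pos (odflt w x) v reg_x; case: (_ == _) => /=; lia.
- by case=> [z|]; rewrite /A_in1 /osplit_mx /= /fin_rows_mx /one_from_reg reg_w //; case: ifP.
- by exists None; rewrite /A_in1 /osplit_mx /= /one_from_reg reg_w.
- by exists None; rewrite /one_from_reg reg_w.
- by exists (Some v); rewrite /A_in1 /osplit_mx /= /fin_rows_mx /one_from_reg (negbTE sing_v).
Qed.

Lemma move_step_merge : move_step (mxgraph _ A_merged) (mxgraph _ A_in2).
Proof.
have A_in2_col s : A_in2 s None = A_in2 s (Some None) by [].
apply: (@move_step_osplit _ _ A_merged None merged_row _ id id) => //.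
- by move=> y; rewrite /A_merged merged_rowE /=; lia.
- by move=> y; rewrite merged_rowE.
- by exists None; rewrite merged_rowE.
- by exists None; rewrite /A_merged merged_rowE.
- move=> s t; rewrite /osplit_mx; case: s => [[x|]|] /=.
  + by case: t => [t|] //=; rewrite A_in2_col.
  + rewrite merged_rowE /= addnK -merged_rowE.
    by case: t => [t|] //=; rewrite A_in2_col.
  + by case: t => [t|] //=; rewrite A_in2_col.
Qed.

(* The row of the vertex split off from [v], minus its identity entry (in
   column [v]), equals the row of [w] minus its identity entry. *)
Definition new_row_entry (t : option 'I_n) : nat :=
  if t == Some w then merged_entry w t - 1
  else if t == Some v then merged_entry w t + 1 else merged_entry w t.

Definition A_final : option (option 'I_n) -> option (option 'I_n) -> xnat :=
  osplit_mx A_merged (Some v) (fun t => XFin (new_row_entry t)).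

Definition final_reg (s : option (option 'I_n)) : bool :=
  if s is Some (Some x) then reg x else true.

Lemma merged_entry_ge {x} t : reg x -> 1 + (Some x == t) <= merged_entry x t.
Proof.
move=> reg_x; case: t => [z|] //=; rewrite (inj_eq Some_inj).
have := C_pos x z reg_x; have := C_pos x w reg_x; have := C_pos x v reg_x.
case: (eqVneq z w) => [->|z_w]; rewrite N_colE // ?eqxx ?(negbTE z_w).
  by case: (x == w) => /=; lia.
by case: (x == z) => /=; lia.
Qed.

Lemma new_row_entry_ge t : 1 <= new_row_entry t.
Proof.
rewrite /new_row_entry; case: eqP => [->|_].
  by have := merged_entry_ge (Some w) reg_w; rewrite eqxx /=; lia.
by case: ifP => _; have := merged_entry_ge t reg_w; case: (Some w == t) => /=; lia.
Qed.

Lemma new_row_entry_v : new_row_entry (Some v) = merged_entry w (Some v) + 1.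
Proof. by rewrite /new_row_entry (inj_eq Some_inj) eq_sym (negbTE w_neq_v) eqxx. Qed.

Lemma A_final_oldE x t : A_final (Some (Some x)) t =
  if reg x then XFin (merged_entry x (odflt (Some v) t)) else XInf.
Proof.
rewrite /A_final /osplit_mx (inj_eq Some_inj).
by case: (eqVneq x v) => [->|_]; rewrite A_mergedE // (negbTE sing_v).
Qed.

Lemma A_final_mergedE t : A_final (Some None) t =
  XFin (merged_entry w (odflt (Some v) t) + merged_entry w (odflt (Some v) t)).
Proof. by rewrite /A_final /osplit_mx /= merged_rowE. Qed.

Lemma A_final_newE t : A_final None t = XFin (new_row_entry (odflt (Some v) t)).
Proof. by []. Qed.

Lemma A_final_sing s t : ~~ final_reg s -> A_final s t = XInf.
Proof. by case: s => [[x|]|] // sing_x; rewrite A_final_oldE ifN. Qed.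

Lemma A_final_reg s t : final_reg s -> exists k, A_final s t = XFin k /\ 1 + (s == t) <= k.
Proof.
case: s => [[x|]|] reg_s.
- rewrite A_final_oldE ifT //; eexists; split; first reflexivity.
  case: t => [t|] /=; first by rewrite (inj_eq Some_inj); apply: merged_entry_ge.
  by apply: leq_trans (merged_entry_ge (Some v) reg_s); rewrite leq_add2l.
- rewrite A_final_mergedE; eexists; split; first reflexivity.
  by have := merged_entry_ge (odflt (Some v) t) reg_w; case: (_ == _) => /=; lia.
- rewrite A_final_newE; eexists; split; first reflexivity.
  case: t => [t|] /=; first exact: new_row_entry_ge.
  by rewrite new_row_entry_v; have := merged_entry_ge (Some v) reg_w; lia.
Qed.

Lemma A_final_merged_col s : final_reg s -> A_final s (Some None) = XFin (1 + (s == Some None)).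
Proof. by case: s => [[x|]|] reg_s; rewrite ?A_final_oldE ?ifT ?A_final_mergedE. Qed.

Lemma A_final_rows_w_new t : final_reg t ->
  xval (A_final (Some (Some w)) t) - (Some (Some w) == t) = xval (A_final None t) - (None == t).
Proof.
have v_w : (v == w) = false by rewrite eq_sym (negbTE w_neq_v).
rewrite A_final_oldE A_final_newE reg_w; case: t => [[x|]|] reg_t /=.
- rewrite !(inj_eq Some_inj) /new_row_entry !(inj_eq Some_inj).
  case: (eqVneq x w) => [->|x_w]; first by rewrite /merged_entry eqxx /=; lia.
  have x_v : (x == v) = false by apply: contraNF sing_v => /eqP <-.
  by rewrite x_v /merged_entry (negbTE x_w) !subn0.
- by rewrite /new_row_entry.
- by rewrite new_row_entry_v /merged_entry v_w; lia.
Qed.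

Lemma eq_w (x : 'I_n) : (x == w) = (x == 0 :> nat). Proof. by []. Qed.

(* Order of the vertices in [J + D]: the merged vertex, the regular vertices
   other than [w], then [w] and the vertex split off from [v], then the
   singular vertices. *)
Definition final_pos (s : option (option 'I_n)) : nat :=
  match s with
  | None => m.+1
  | Some None => 0
  | Some (Some x) => if x == w then m else if x < m then val x else x.+2
  end.
Definition final_index (s : option (option 'I_n)) : 'I_n.+2 := inord (final_pos s).
Definition final_vertex (i : 'I_n.+2) : option (option 'I_n) :=
  if i == 0 :> nat then Some None
  else if i < m then Some (Some (insubd w i))
  else if i == m :> nat then Some (Some w)
  else if i == m.+1 :> nat then None
  else Some (Some (insubd w (i - 2))).

Lemma final_indexE s : final_index s = final_pos s :> nat.
Proof.
rewrite inordK //; case: s => [[x|]|] //=; last by lia.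
by have := ltn_ord x; case: ifP => _; [lia | case: ifP => _; lia].
Qed.

Lemma final_indexK : cancel final_index final_vertex.
Proof.
move=> s; rewrite /final_vertex final_indexE; case: s => [[x|]|] /=.
- rewrite eq_w; case: (eqVneq (x : nat) 0) => [x0|x_neq0].
    rewrite ifF ?ltnn ?eqxx; last by lia.
    by congr (Some (Some _)); apply: val_inj.
  case: ltnP => [x_lt|x_ge]; first by rewrite (negbTE x_neq0) x_lt valKd.
  by rewrite !ifF ?subn2 ?valKd //; lia.
- by [].
- by rewrite ltnNge leqnSn gtn_eqF ?eqxx.
Qed.

Lemma final_vertexK : cancel final_vertex final_index.
Proof.
move=> i; apply: ord_inj; rewrite final_indexE /final_vertex.
have i_lt := ltn_ord i.
case: (eqVneq (i : nat) 0) => [-> //|i_neq0].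
case: ifP => i_m.
  have i_n : i < n by lia.
  by rewrite /= eq_w val_insubd i_n (negbTE i_neq0) i_m.
case: (eqVneq (i : nat) m) => [-> //|i_neq_m].
case: (eqVneq (i : nat) m.+1) => [-> //|i_neq_m1].
have i_n : i - 2 < n by lia.
by rewrite /= eq_w val_insubd i_n; case: ifP => ?; [lia | case: ifP => ?; lia].
Qed.

Lemma final_index_reg s : (final_index s < m.+2) = final_reg s.
Proof.
rewrite final_indexE; case: s => [[x|]|] //=; last by lia.
by rewrite eq_w /reg; case: ifP => x0; [|case: ifP => x_m]; lia.
Qed.

Lemma final_vertex_reg i : final_reg (final_vertex i) = (i < m.+2).
Proof. by rewrite -final_index_reg final_vertexK. Qed.

Lemma final_vertex_eq (i l : 'I_n.+2) : (final_vertex i == final_vertex l) = (i == l).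
Proof. exact/inj_eq/can_inj/final_vertexK. Qed.

Definition Dmx : 'M[int]_n.+2 := \matrix_(i, l)
  (if i < m.+2 then Posz (xval (A_final (final_vertex i) (final_vertex l)) - (i == l)) else 0%R).

Lemma move_step_final : move_step (mxgraph _ A_merged)
  (mxgraph 'I_n.+2 (Jplus n.+2 m.+2 (fun i l => absz (Dmx i l)))).
Proof.
apply: (@move_step_osplit _ _ A_merged (Some v) (fun t => XFin (new_row_entry t)) _
  final_index final_vertex) => //.
- by move=> y; rewrite A_mergedE (negbTE sing_v).
- by exists None; rewrite /= /new_row_entry.
- by exists None; rewrite A_mergedE (negbTE sing_v).
- exact: final_indexK.
- exact: final_vertexK.
- move=> s t; rewrite /Jplus /Jmx mxE !final_indexK final_index_reg.
  rewrite (inj_eq (can_inj final_indexK)) -[osplit_mx _ _ _ s t]/(A_final s t).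
  case: (boolP (final_reg s)) => reg_s; last by rewrite A_final_sing.
  by have [k [-> k_ge]] := A_final_reg s t reg_s; congr XFin; rewrite /=; lia.
Qed.

Lemma move_eq_Dmx : move_eq_mx n n.+2 (Jplus n m (fun i j => C i j))
  (Jplus n.+2 m.+2 (fun i l => absz (Dmx i l))).
Proof.
apply: (me_trans _ _ _ move_eq_col).
apply: (me_trans _ _ _ (me_step _ _ move_step_in1)).
apply: (me_trans _ _ _ (me_step _ _ move_step_in2)).
apply: (me_trans _ _ _ (me_sym _ _ (me_step _ _ move_step_merge))).
exact: me_step move_step_final.
Qed.

Lemma Dmx_sing_rows (i l : 'I_n.+2) : m.+2 <= i -> Dmx i l = 0%R.
Proof. by move=> i_ge; rewrite mxE ltnNge i_ge. Qed.

Lemma Dmx_reg_pos (i l : 'I_n.+2) : i < m.+2 -> (0 < Dmx i l)%R.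
Proof.
move=> i_lt; rewrite mxE i_lt ltz_nat -final_vertex_eq.
have reg_i : final_reg (final_vertex i) by rewrite final_vertex_reg.
have [k [-> k_ge]] := A_final_reg _ (final_vertex l) reg_i.
by rewrite /=; lia.
Qed.

Lemma Dmx_first_col (i : 'I_n.+2) : i < m.+2 -> Dmx i ord0 = 1%R.
Proof.
move=> i_lt; rewrite mxE i_lt -final_vertex_eq [final_vertex ord0]/=.
by rewrite A_final_merged_col ?final_vertex_reg //= addnK.
Qed.

Lemma det_Dmx_corner : (\det (\matrix_(i < m.+2, l < m.+2) Dmx (inord i) (inord l)) = 0)%R.
Proof.
have m_ne_m1 : (inord m : 'I_m.+2) != inord m.+1.
  by apply/eqP => /(congr1 val); rewrite /= !inordK //; lia.
apply: (determinant_alternate m_ne_m1) => l; rewrite !mxE.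
have -> : nat_of_ord (inord m : 'I_m.+2) = m by rewrite inordK.
have -> : nat_of_ord (inord m.+1 : 'I_m.+2) = m.+1 by rewrite inordK.
have -> : (inord m : 'I_n.+2) = final_index (Some (Some w)) by [].
have -> : (inord m.+1 : 'I_n.+2) = final_index None by [].
rewrite !final_index_reg !ifT // -!final_vertex_eq !final_indexK; congr Posz.
by apply: A_final_rows_w_new; rewrite final_vertex_reg inordK; have := ltn_ord l; lia.
Qed.

End Construction.

Theorem proposition8p3 (n m : nat) (C : 'M[nat]_n) :
  (m <= n)%N -> m != n ->
  (forall (i j : 'I_n), (i < m)%N -> (0 < C i j)%N) ->
  (forall (i j : 'I_n), (m <= i)%N -> C i j = 0%N) ->
  (exists (i j : 'I_n), C i j = 1%N) ->
  exists D : 'M[int]_(n.+2),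
    [/\ (forall (i l : 'I_(n.+2)), (m.+2 <= i)%N -> D i l = 0%R),
        (forall (i l : 'I_(n.+2)), (i < m.+2)%N -> (0 < D i l)%R),
        (forall (i : 'I_(n.+2)), (i < m.+2)%N -> D i ord0 = 1%R),
        (\det (\matrix_(i < m.+2, l < m.+2) D (inord i) (inord l)) = 0)%R
      & move_eq_mx n n.+2 (Jplus n m (fun i j => C i j))
                   (Jplus n.+2 m.+2 (fun i l => absz (D i l)))].
Proof.
move=> m_le_n m_neq_n C_pos C_zero [i [j Cij]].
have m_gt0 : 0 < m by rewrite lt0n; apply: contra_eqN Cij => /eqP m0; rewrite C_zero ?m0.
have m_lt_n : m < n by rewrite ltn_neqAle m_neq_n.
exists (Dmx n m C m_gt0 m_lt_n); split.
- exact: Dmx_sing_rows.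
- exact: Dmx_reg_pos.
- exact: Dmx_first_col.
- exact: det_Dmx_corner.
- exact: move_eq_Dmx.
Qed.
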